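(* Let $\mathbb{F}$ be an algebraically closed field of characteristic zero and let $(\mathfrak{g},[\cdot,\cdot],T)$ be a finite-dimensional nilpotent Hom-Lie algebra over $\mathbb{F}$ whose twist map $T$ is equivariant. Define $[x,y]_{\mathrm{Lie}}=T([x,y])$ for $x,y\in\mathfrak{g}$ (this is a Lie bracket on $\mathfrak{g}$). Then $(\mathfrak{g},[\cdot,\cdot]_{\mathrm{Lie}})$ is a nilpotent Lie algebra.
   Context: A Hom-Lie algebra $(\mathfrak{g},[\cdot,\cdot],T)$ is a vector space with a skew-symmetric bilinear map $[\cdot,\cdot]$ and a linear map $T$ (twist map) satisfying $[T(x),[y,z]]+[T(y),[z,x]]+[T(z),[x,y]]=0$ for all $x,y,z$. $T$ is equivariant if $T([x,y])=[T(x),y]$ for all $x,y$. Set $\mathfrak{g}^2=[\mathfrak{g},\mathfrak{g}]$ and $\mathfrak{g}^{n+1}=[\mathfrak{g},\mathfrak{g}^n]$ (spans of brackets); the Hom-Lie algebra is nilpotent if $\mathfrak{g}^m=0$ for some $m\in\mathbb{N}$. *)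

From HB Require Import structures.
From mathcomp Require Import all_boot all_order all_algebra.
Set Implicit Arguments. Unset Strict Implicit. Unset Printing Implicit Defensive.
Import GRing.Theory.
Local Open Scope ring_scope.

Section HomLie.
Variables (F : fieldType) (V : lmodType F).

Definition is_linear_map (T : V -> V) : Prop :=
  forall (a : F) (x y : V), T (a *: x + y) = a *: T x + T y.

Definition is_bilinear (br : V -> V -> V) : Prop :=
  (forall (a : F) (x y z : V), br (a *: x + y) z = a *: br x z + br y z) /\
  (forall (a : F) (x y z : V), br z (a *: x + y) = a *: br z x + br z y).

Definition is_skew (br : V -> V -> V) : Prop :=
  forall x y : V, br x y = - br y x.

Definition hom_jacobi (br : V -> V -> V) (T : V -> V) : Prop :=
  forall x y z : V, br (T x) (br y z) + br (T y) (br z x) + br (T z) (br x y) = 0.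

Definition is_hom_lie (br : V -> V -> V) (T : V -> V) : Prop :=
  [/\ is_bilinear br, is_skew br, is_linear_map T & hom_jacobi br T].

Definition equivariant (br : V -> V -> V) (T : V -> V) : Prop :=
  forall x y : V, T (br x y) = br (T x) y.

Definition jacobi (br : V -> V -> V) : Prop :=
  forall x y z : V, br x (br y z) + br y (br z x) + br z (br x y) = 0.

Definition is_lie (br : V -> V -> V) : Prop :=
  [/\ is_bilinear br, is_skew br & jacobi br].

Inductive span_set (S : V -> Prop) : V -> Prop :=
| span_zero : span_set S 0
| span_gen : forall v, S v -> span_set S v
| span_add : forall u v, span_set S u -> span_set S v -> span_set S (u + v)
| span_scale : forall (a : F) v, span_set S v -> span_set S (a *: v).

(* lower central series: lcs br 0 = g (= g^1), lcs br (n+1) = [g, lcs br n] (= g^(n+2)) *)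
Fixpoint lcs (br : V -> V -> V) (n : nat) : V -> Prop :=
  match n with
  | 0%N => fun _ => True
  | n'.+1 => span_set (fun z => exists x y, lcs br n' y /\ z = br x y)
  end.

Definition nilpotent (br : V -> V -> V) : Prop :=
  exists m : nat, forall v, lcs br m v -> v = 0.

End HomLie.

From Pilot Require Import Defs.
From HB Require Import structures.
From mathcomp Require Import all_boot all_order all_algebra.
Set Implicit Arguments. Unset Strict Implicit. Unset Printing Implicit Defensive.
Import GRing.Theory.
Local Open Scope ring_scope.

(* Equivariance and skew-symmetry let T pass to either argument of the
   bracket, so [x, [y, z]_Lie]_Lie = T [x, T [y, z]] = T [T x, [y, z]]: the
   Jacobi identity of the new bracket is T applied to the Hom-Jacobi identity.
   Moreover [x, y]_Lie = [T x, y], so every term of the lower central series of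
   the new bracket lies in the corresponding term for the old one, and
   nilpotency is inherited. *)

Section LinearMap.
Variables (F : fieldType) (V : lmodType F) (T : V -> V).
Hypothesis linT : is_linear_map T.

Lemma linear_map0 : T 0 = 0.
Proof. by have := linT (-1) 0 0; rewrite !scaleN1r !addNr. Qed.

Lemma linear_mapD (x y : V) : T (x + y) = T x + T y.
Proof. by have := linT 1 x y; rewrite !scale1r. Qed.

Lemma linear_mapN (x : V) : T (- x) = - T x.
Proof. by have := linT (-1) x 0; rewrite !scaleN1r addr0 linear_map0 addr0. Qed.

End LinearMap.

Section LowerCentralSeries.
Variables (F : fieldType) (V : lmodType F).

Lemma span_set_sub (S1 S2 : V -> Prop) (v : V) :
  (forall u, S1 u -> S2 u) -> span_set S1 v -> span_set S2 v.
Proof.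
move=> sub12; elim=> [|u /sub12|u w _ Hu _ Hw|a u _ Hu].
- exact: span_zero.
- exact: span_gen.
- exact: span_add.
- exact: span_scale.
Qed.

Lemma lcs_sub (br br' : V -> V -> V) :
  (forall x y, exists x', br' x y = br x' y) ->
  forall n v, lcs br' n v -> lcs br n v.
Proof.
move=> hbr; elim=> [//|n IH] v /=.
apply: span_set_sub => _ [x [y [lcs_y ->]]].
have [x' ->] := hbr x y.
by exists x', y; split; first exact: IH.
Qed.

Lemma nilpotent_sub (br br' : V -> V -> V) :
  (forall x y, exists x', br' x y = br x' y) -> nilpotent br -> nilpotent br'.
Proof.
move=> hbr [m nil_m]; exists m => v lcs_v.
exact: nil_m (lcs_sub hbr lcs_v).
Qed.

End LowerCentralSeries.

Section TwistedBracket.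
Variables (F : fieldType) (V : lmodType F) (br : V -> V -> V) (T : V -> V).
Hypotheses (hHL : is_hom_lie br T) (hEq : equivariant br T).

Definition twisted_bracket (x y : V) : V := T (br x y).

Let bilin_br : is_bilinear br. Proof. by case: hHL. Qed.
(* [Defs.] is needed: ssralg's sesquilinear-form [is_skew] shadows the one in Defs. *)
Let skew_br : Defs.is_skew br. Proof. by case: hHL. Qed.
Let linT : is_linear_map T. Proof. by case: hHL. Qed.
Let hom_jacobi_br : hom_jacobi br T. Proof. by case: hHL. Qed.

Lemma equivariantr (x y : V) : T (br x y) = br x (T y).
Proof. by rewrite skew_br linear_mapN // hEq -skew_br. Qed.

Lemma twisted_bracketE (x y : V) : twisted_bracket x y = br (T x) y.
Proof. exact: hEq. Qed.

Lemma twisted_bracket_bilinear : is_bilinear twisted_bracket.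
Proof.
case: bilin_br => brDl brDr.
by split=> a x y z; rewrite /twisted_bracket ?brDl ?brDr linT.
Qed.

Lemma twisted_bracket_skew : Defs.is_skew twisted_bracket.
Proof. by move=> x y; rewrite /twisted_bracket skew_br linear_mapN. Qed.

Lemma twisted_bracket_jacobi : jacobi twisted_bracket.
Proof.
have Tbr_T (x u : V) : T (br x (T u)) = T (br (T x) u).
  by rewrite hEq -equivariantr.
move=> x y z; rewrite /twisted_bracket !Tbr_T -!linear_mapD //.
by rewrite hom_jacobi_br linear_map0.
Qed.

Lemma twisted_bracket_lie : is_lie twisted_bracket.
Proof.
split; [exact: twisted_bracket_bilinear | exact: twisted_bracket_skew |].
exact: twisted_bracket_jacobi.
Qed.

Lemma twisted_bracket_nilpotent : nilpotent br -> nilpotent twisted_bracket.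
Proof.
apply: nilpotent_sub => x y.
by exists (T x); rewrite twisted_bracketE.
Qed.

End TwistedBracket.

Theorem proposition3p1 (F : closedFieldType) (hF : [pchar F] =i pred0)
  (V : vectType F) (br : V -> V -> V) (T : V -> V)
  (hHL : is_hom_lie br T) (hEq : equivariant br T) (hNil : nilpotent br) :
  is_lie (fun x y => T (br x y)) /\ nilpotent (fun x y => T (br x y)).
Proof.
split; first exact: twisted_bracket_lie.
exact: twisted_bracket_nilpotent.
Qed.
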